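(* Let $\mathcal{G}^c=(\mathbb{C},\mathbb{E}^c)$ be a C-DMG, $\mathcal{G}$ a DMG compatible with it, $\mathbb{C}_A\subseteq\mathbb{C}$ a set of clusters and $A=\bigcup_{C\in\mathbb{C}_A}C$. Let $\mathcal{G}^c_{\overline{\mathbb{C}_A}}$ and $\mathcal{G}_{\overline{A}}$ be the graphs obtained by intervening on $\mathbb{C}_A$ in $\mathcal{G}^c$ and on $A$ in $\mathcal{G}$. Then $\mathcal{G}_{\overline{A}}$ is compatible with $\mathcal{G}^c_{\overline{\mathbb{C}_A}}$. Moreover, if $\mathcal{M}(\mathcal{G}^c)$ denotes the maximal compatible DMG of $\mathcal{G}^c$, then $\mathcal{M}(\mathcal{G}^c)_{\overline{A}}$ and $\mathcal{M}(\mathcal{G}^c_{\overline{\mathbb{C}_A}})$ are the same graph.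
   Context: A DMG has directed edges $\to$ and bidirected edges $\leftrightarrow$, cycles allowed. Given a graph $\mathcal{G}=(\mathbb{V},\mathbb{E})$ and a partition $\mathbb{C}$ of $\mathbb{V}$ into nonempty clusters, $\mathcal{G}$ is compatible with $\mathcal{G}^c=(\mathbb{C},\mathbb{E}^c)$ if for all $C_i,C_j\in\mathbb{C}$ (possibly equal), $C_i\to C_j$ (resp. $C_i\leftrightarrow C_j$) is in $\mathbb{E}^c$ iff there exist $V_i\in C_i,V_j\in C_j$ with $V_i\to V_j$ (resp. $V_i\leftrightarrow V_j$) in $\mathbb{E}$; a C-DMG is such a $\mathcal{G}^c$ for some DMG. Intervening on a vertex set $D$ in a graph means removing all directed edges whose head is in $D$ and all bidirected edges with an endpoint in $D$. The maximal compatible DMG $\mathcal{M}(\mathcal{G}^c)$ of a C-DMG $\mathcal{G}^c$ has vertex set $\bigcup_{C\in\mathbb{C}}C$, directed edges $V\to V'$ for all $V\in C,V'\in C'$ with $C\to C'\in\mathbb{E}^c$, and bidirected edges $V\leftrightarrow V'$ for all $V\in C,V'\in C'$ with $C\leftrightarrow C'\in\mathbb{E}^c$. *)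

From mathcomp Require Import all_boot.
Set Implicit Arguments. Unset Strict Implicit. Unset Printing Implicit Defensive.

(* A directed mixed graph on a finite vertex type: directed edges [dir x y]
   means x -> y (self-loops and cycles allowed); bidirected edges [bi] form a
   symmetric relation (x <-> y is the same edge as y <-> x). *)
Record dmg (V : finType) := DMG {
  dir : rel V;
  bi : rel V;
  bi_sym : symmetric bi }.

Definition cluster (V : finType) (P : {set {set V}}) := {C : {set V} | C \in P}.

Definition compatible (V : finType) (P : {set {set V}})
    (G : dmg V) (Gc : dmg (cluster P)) : Prop :=
  forall Ci Cj : cluster P,
    dir Gc Ci Cj = [exists x in val Ci, exists y in val Cj, dir G x y] /\
    bi Gc Ci Cj = [exists x in val Ci, exists y in val Cj, bi G x y].

Definition int_dir (T : finType) (G : dmg T) (D : {set T}) : rel T :=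
  fun x y => dir G x y && (y \notin D).
Definition int_bi (T : finType) (G : dmg T) (D : {set T}) : rel T :=
  fun x y => [&& bi G x y, x \notin D & y \notin D].
Lemma int_bi_sym (T : finType) (G : dmg T) (D : {set T}) :
  symmetric (int_bi G D).
Proof. by move=> x y; rewrite /int_bi (bi_sym G); case: (x \in D); case: (y \in D); rewrite ?andbF. Qed.
Definition intervene (T : finType) (G : dmg T) (D : {set T}) : dmg T :=
  DMG (int_dir G D) (@int_bi_sym T G D).

Definition max_dir (V : finType) (P : {set {set V}}) (Gc : dmg (cluster P)) : rel V :=
  fun x y => [exists Ci : cluster P, exists Cj : cluster P,
                [&& x \in val Ci, y \in val Cj & dir Gc Ci Cj]].
Definition max_bi (V : finType) (P : {set {set V}}) (Gc : dmg (cluster P)) : rel V :=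
  fun x y => [exists Ci : cluster P, exists Cj : cluster P,
                [&& x \in val Ci, y \in val Cj & bi Gc Ci Cj]].
Lemma max_bi_sym (V : finType) (P : {set {set V}}) (Gc : dmg (cluster P)) :
  symmetric (max_bi Gc).
Proof.
move=> x y; apply/existsP/existsP => -[Ci /existsP [Cj /and3P [h1 h2 h3]]];
  exists Cj; apply/existsP; exists Ci; by rewrite h1 h2 (bi_sym Gc).
Qed.
Definition maxdmg (V : finType) (P : {set {set V}}) (Gc : dmg (cluster P)) : dmg V :=
  DMG (max_dir Gc) (@max_bi_sym V P Gc).

(* Since the clusters are pairwise disjoint, whether a vertex lies in A is
   decided by its cluster alone.  So the condition under which intervening on
   A keeps an edge x -> y (resp. x <-> y) coincides with the condition under
   which intervening on CA keeps the edge between the clusters of x and y, and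
   a filter of this kind commutes with the existential quantifiers over
   vertices (in compatibility) and over clusters (in the maximal DMG). *)
From mathcomp Require Import all_boot.

Set Implicit Arguments.
Unset Strict Implicit.
Unset Printing Implicit Defensive.

Lemma mem_bigcup_cluster (V : finType) (P : {set {set V}}) (tP : trivIset P)
    (CA : {set cluster P}) (C : cluster P) (y : V) :
  y \in val C -> (y \in \bigcup_(C' in CA) val C') = (C \in CA).
Proof.
move=> yC; apply/bigcupP/idP => [[C' C'A yC'] | CA_C]; last by exists C.
suff -> : C = C' by [].
apply: val_inj.
by rewrite -(def_pblock tP (valP C) yC) (def_pblock tP (valP C') yC').
Qed.

Section ClusterDeterminedFilter.

Variables (V : finType) (P : {set {set V}}).
Variables (p : rel (cluster P)) (q : rel V).
Hypothesis q_cluster : forall {Ci Cj : cluster P} {x y : V},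
  x \in val Ci -> y \in val Cj -> q x y = p Ci Cj.

Lemma exists_in_clusters_andr (r : rel V) (Ci Cj : cluster P) :
  [exists x in val Ci, exists y in val Cj, r x y] && p Ci Cj =
  [exists x in val Ci, exists y in val Cj, r x y && q x y].
Proof.
apply/andP/existsP => [[/existsP [x /andP [xCi /existsP [y /andP [yCj rxy]]]] pC]
                      | [x /andP [xCi /existsP [y /and3P [yCj rxy qxy]]]]].
  exists x; rewrite xCi; apply/existsP; exists y.
  by rewrite yCj rxy (q_cluster xCi yCj).
split; last by rewrite -(q_cluster xCi yCj).
by apply/existsP; exists x; rewrite xCi; apply/existsP; exists y; rewrite yCj.
Qed.

Lemma exists_clusters_andr (rc : rel (cluster P)) (x y : V) :
  [exists Ci : cluster P, exists Cj : cluster P,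
     [&& x \in val Ci, y \in val Cj & rc Ci Cj]] && q x y =
  [exists Ci : cluster P, exists Cj : cluster P,
     [&& x \in val Ci, y \in val Cj & rc Ci Cj && p Ci Cj]].
Proof.
apply/andP/existsP => [[/existsP [Ci /existsP [Cj /and3P [xCi yCj rC]]] qxy]
                      | [Ci /existsP [Cj /and3P [xCi yCj /andP [rC pC]]]]].
  exists Ci; apply/existsP; exists Cj.
  by rewrite xCi yCj rC -(q_cluster xCi yCj).
split; last by rewrite (q_cluster xCi yCj).
by apply/existsP; exists Ci; apply/existsP; exists Cj; rewrite xCi yCj rC.
Qed.

End ClusterDeterminedFilter.

Theorem mainTheorem6 (V : finType) (P : {set {set V}})
    (hP : partition P [set: V])
    (Gc : dmg (cluster P)) (G : dmg V) (hG : compatible G Gc)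
    (CA : {set cluster P}) :
  let A := \bigcup_(C in CA) val C in
  compatible (intervene G A) (intervene Gc CA) /\
  (forall x y : V,
     dir (intervene (maxdmg Gc) A) x y = dir (maxdmg (intervene Gc CA)) x y) /\
  (forall x y : V,
     bi (intervene (maxdmg Gc) A) x y = bi (maxdmg (intervene Gc CA)) x y).
Proof.
move=> A.
have memA := mem_bigcup_cluster (partition_trivIset hP) CA.
have head_out (Ci Cj : cluster P) (x y : V) : x \in val Ci -> y \in val Cj ->
    (y \notin A) = (Cj \notin CA).
  by move=> _ /memA ->.
have ends_out (Ci Cj : cluster P) (x y : V) : x \in val Ci -> y \in val Cj ->
    (x \notin A) && (y \notin A) = (Ci \notin CA) && (Cj \notin CA).
  by move=> /memA -> /memA ->.
split; [|split] => [Ci Cj | x y | x y] /=.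
- rewrite /int_dir /int_bi; have [-> ->] := hG Ci Cj.
  by rewrite (exists_in_clusters_andr head_out) (exists_in_clusters_andr ends_out).
- exact: (exists_clusters_andr head_out).
- exact: (exists_clusters_andr ends_out).
Qed.
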